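(* In the setting of the context, suppose $\beta=\beta_0>1$. For $y\ge1$ let $\pi'(y)=\sum_{\tau:\ \lambda(\tau)\le y}\mathrm{tr}({}^t\Psi_\tau)$, the sum over periodic orbits $\tau$ of $\sigma$ with minimal period $\lambda(\tau)\le y$. Then for every $\gamma'>1$, $\frac{\pi'(y)}{\beta^{\gamma'y}}\to0$ as $y\to+\infty$.
   Context: $\Sigma=\{1,\dots,t\}^{\mathbb{N}}$, $\sigma$ the shift, $ix=(i,x_0,x_1,\dots)$. $\psi_1,\dots,\psi_t$ are affine bijections of $\mathbb{R}^d$ with $\max\mathrm{Lip}(\psi_i)<1$; $q\in\{1,\dots,d\}$; $(D\psi_i)_*$ is the pull-back on $q$-forms $\Lambda^q(\mathbb{R}^d)$ (inner product induced by the Euclidean one); $M^q$ = self-adjoint operators on $\Lambda^q$; $\Psi_i(A)={}^t(D\psi_i)_*A(D\psi_i)_*$, ${}^t\Psi_i(A)=(D\psi_i)_*A\,{}^t(D\psi_i)_*$. Assume $(ND_q)$: there is $\gamma>0$ such that for all $c,e\in\Lambda^q$ some $i$ has $|((D\psi_i)_*c,e)|\ge\gamma\|c\|\|e\|$. Then the operator $(\mathcal{L}_0A)(x)=\sum_{i=1}^t\Psi_i(A(ix))$ on $C(\Sigma,M^q)$ has a unique eigenvalue $\beta_0>0$ admitting an eigenfunction that is positive definite at every point. A periodic orbit $\tau$ is the set $\{x,\sigma(x),\dots,\sigma^{n-1}(x)\}$ of a point of minimal period $n=\lambda(\tau)$, and $\mathrm{tr}({}^t\Psi_\tau)=\mathrm{tr}({}^t\Psi_{x_0}\circ\dots\circ{}^t\Psi_{x_{n-1}})$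 for any $x\in\tau$ (independent of the choice). *)

From HB Require Import structures.
From mathcomp Require Import all_boot all_order all_algebra.
From mathcomp Require Import all_classical all_reals all_analysis.
Set Implicit Arguments. Unset Strict Implicit. Unset Printing Implicit Defensive.
Import Order.TTheory GRing.Theory Num.Theory.
Import numFieldTopology.Exports numFieldNormedType.Exports.
Local Open Scope classical_set_scope.
Local Open Scope ring_scope.

(** * Symbolic space Sigma = {1,...,t}^N (symbol i+1 is coded by i : 'I_t),
      with the product of discrete topologies. *)
Notation Sigma t := (prod_topology (fun _ : nat => discrete_topology 'I_t)).

Definition shift t (x : Sigma t) : Sigma t := fun n => x n.+1.

Definition scons t (i : 'I_t) (x : Sigma t) : Sigma t :=
  fun n => if n is m.+1 then x m else i.

Definition minper t (x : Sigma t) (n : nat) : Prop :=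
  (0 < n)%N /\ iter n (@shift t) x = x /\
  (forall k, (0 < k < n)%N -> iter k (@shift t) x <> x).

Definition orbit t (x : Sigma t) (n : nat) : set (Sigma t) :=
  [set iter k (@shift t) x | k in [set k | (k < n)%N]].

(** Lambda^q(R^d) is coordinatised in the orthonormal basis
      dx_S = dx_{s_1} /\ ... /\ dx_{s_q} (s_1 < ... < s_q), S a q-subset of 'I_d;
      the basis elements are enumerated through enum_val. *)
Definition qsub (d q : nat) := {S : {set 'I_d} | #|S| == q}.
Definition qdim (d q : nat) : nat := #|{: qsub d q}|.
Definition qidx (d q : nat) (i : 'I_(qdim d q)) : {set 'I_d} := val (enum_val i).

Definition sorted_elts d (S : {set 'I_d}) : seq nat :=
  sort leq [seq val i | i <- enum S].

(** entry of a d x d matrix indexed by naturals (0 outside) *)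
Definition entn (R : pzRingType) d (L : 'M[R]_d) (a b : nat) : R :=
  oapp (fun a' : 'I_d => oapp (fun b' : 'I_d => L a' b') 0 (insub b)) 0 (insub a).

Definition minor (R : comPzRingType) d q (L : 'M[R]_d) (S T : {set 'I_d}) : R :=
  \det (\matrix_(i < q, j < q)
          entn L (nth 0%N (sorted_elts S) i) (nth 0%N (sorted_elts T) j)).

(** matrix of the pull-back (L)_* on q-forms:
    (L^* w)(e_{t_1},...,e_{t_q}) = w(L e_{t_1},...,L e_{t_q}),
    i.e. (L^* w)_T = sum_S det L[S,T] w_S. *)
Definition pullq (R : comPzRingType) d q (L : 'M[R]_d) : 'M[R]_(qdim d q) :=
  \matrix_(T, S) minor q L (qidx S) (qidx T).

(** Psi_i(A) = ^t P A P  and  ^t Psi_i (A) = P A ^t P, for P = (D psi_i)_* *)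
Definition Psi (R : comPzRingType) n (P : 'M[R]_n) (A : 'M[R]_n) : 'M[R]_n :=
  P^T *m A *m P.
Definition tPsi (R : comPzRingType) n (P : 'M[R]_n) (A : 'M[R]_n) : 'M[R]_n :=
  P *m A *m P^T.

(** basis of the space M^q of self-adjoint (symmetric) operators *)
Definition symE (R : pzRingType) n (i j : 'I_n) : 'M[R]_n :=
  if i == j then delta_mx i i else delta_mx i j + delta_mx j i.

(** trace of a linear endomorphism Phi of the space of symmetric matrices,
    computed in the basis (symE i j)_{i <= j}: the coordinate of a symmetric
    B on symE i j (i <= j) is B i j. *)
Definition trSym (R : pzRingType) n (Phi : 'M[R]_n -> 'M[R]_n) : R :=
  \sum_(i < n) \sum_(j < n | (i <= j)%N) Phi (@symE R n i j) i j.

Definition tPsi_word (R : comPzRingType) t N (P : 'I_t -> 'M[R]_N)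
    (x : Sigma t) (n : nat) : 'M[R]_N -> 'M[R]_N :=
  foldr (fun k f => tPsi (P (x k)) \o f) id (iota 0 n).

(** tr(^t Psi_tau), computed at some (any) point of tau *)
Definition trOrb (R : realType) t N (P : 'I_t -> 'M[R]_N)
    (tau : set (Sigma t)) : R :=
  match pselect (exists xn : Sigma t * nat,
                   minper xn.1 xn.2 /\ tau = orbit xn.1 xn.2) with
  | left e => let xn := projT1 (cid e) in trSym (tPsi_word P xn.1 xn.2)
  | right _ => 0
  end.

Definition orbits_le (R : realType) t (y : R) : set (set (Sigma t)) :=
  [set tau | exists x n, minper x n /\ (n%:R <= y) /\ tau = orbit x n].

Definition piprime (R : realType) t N (P : 'I_t -> 'M[R]_N) (y : R) : R :=
  \sum_(tau \in @orbits_le R t y) trOrb P tau.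

Definition dotv (R : pzRingType) n (u v : 'cV[R]_n) : R := \sum_(k < n) u k 0 * v k 0.
Definition normv (R : realType) n (u : 'cV[R]_n) : R := Num.sqrt (dotv u u).

Definition L0 (R : comPzRingType) t N (P : 'I_t -> 'M[R]_N)
    (A : Sigma t -> 'M[R]_N) (x : Sigma t) : 'M[R]_N :=
  \sum_(i < t) Psi (P i) (A (scons i x)).

Definition posdef_eigenvalue (R : realType) t N (P : 'I_t -> 'M[R]_N) (beta : R)
  : Prop :=
  exists A : Sigma t -> 'M[R]_N,
    (forall i j, continuous (fun x : Sigma t => A x i j)) /\
    (forall x, (A x)^T = A x) /\
    (forall x (v : 'cV[R]_N), v != 0 -> 0 < dotv v (A x *m v)) /\
    (forall x, L0 P A x = beta *: A x).

(* For a word w write Q_w = P_(w_0) ... P_(w_(n-1)), where P_i = (D psi_i)_*.  A periodic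
   orbit of minimal period n is determined by its word of length n, and tr(^t Psi_tau) is the
   trace of X |-> Q_w X ^t Q_w on symmetric matrices, so it is bounded by a constant times the
   squared Frobenius norm of Q_w.  Iterating the eigen-equation of L_0 gives
   sum_(|w| = n) ^t Q_w A(wx) Q_w = beta^n A(x); as Sigma is compact, A is uniformly positive
   definite, hence sum_(|w| = n) |Q_w|^2 <= K beta^n.  Summing over n <= y yields
   pi'(y) = O(beta^y), which is o(beta^(gamma' y)). *)

From Pilot Require Import Defs.
From HB Require Import structures.
From mathcomp Require Import all_boot all_order all_algebra.
From mathcomp Require Import all_classical all_reals all_analysis.
Import Order.TTheory GRing.Theory Num.Theory.
Import numFieldTopology.Exports numFieldNormedType.Exports.
Local Open Scope classical_set_scope.
Local Open Scope ring_scope.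

Set Implicit Arguments.
Unset Strict Implicit.
Unset Printing Implicit Defensive.

Lemma Sigma_compact t : compact [set: Sigma t].
Proof.
have := @tychonoff nat (fun _ => discrete_topology 'I_t) (fun _ => setT) _.
rewrite (_ : [set f | _] = setT); last by apply/seteqP; split.
by apply=> i; apply: finite_compact; exact: finite_finset.
Qed.

Lemma unit_sphere_compact (R : realType) n : compact [set u : 'rV[R]_n | `|u| = 1].
Proof.
apply: bounded_closed_compact.
  rewrite /= /bounded_near; near=> M => u /= ->.
  near: M; exact: nbhs_pinfty_ge.
apply: (@preimage_closed _ _ (fun u : 'rV[R]_n => `|u|) [set 1]).
  by move=> x _; exact: norm_continuous.
exact: closed_eq.
Unshelve. all: by end_near. Qed.

Lemma ler_norm_mx_entry (R : realDomainType) m n (M : 'M[R]_(m, n)) i j :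
  `|M i j| <= `|M|.
Proof.
change (`|M i j| <= mx_norm M); rewrite mx_normrE; apply/bigmax_geP; right.
by exists (i, j).
Qed.

Lemma dotv0 (R : pzRingType) n (v : 'cV[R]_n) : dotv 0 v = 0.
Proof. by rewrite /dotv big1 // => i _; rewrite mxE mul0r. Qed.

Lemma dotvZZ (R : comPzRingType) n (k : R) (u v : 'cV[R]_n) :
  dotv (k *: u) (k *: v) = k ^+ 2 * dotv u v.
Proof.
rewrite /dotv mulr_sumr; apply: eq_bigr => i _.
by rewrite !mxE mulrCA !mulrA expr2.
Qed.

Lemma dotv_self_le (R : realDomainType) n (v : 'cV[R]_n) :
  dotv v v <= n%:R * `|v^T| ^+ 2.
Proof.
rewrite /dotv mulr_natl -[X in _ *+ X](card_ord n) -sumr_const.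
apply: ler_sum => i _.
have := ler_norm_mx_entry v^T ord0 i; rewrite mxE -expr2 => vi.
by rewrite -real_normK ?num_real // lerXn2r ?nnegrE.
Qed.

Lemma quadform_continuous (R : realType) (T : topologicalType) N
    (A : T -> 'M[R]_N) :
  (forall i j, continuous (fun x => A x i j)) ->
  continuous (fun p : T * 'rV[R]_N => dotv p.2^T (A p.1 *m p.2^T)).
Proof.
move=> Ac.
have coordc (k : 'I_N) : continuous (fun p : T * 'rV[R]_N => p.2 ord0 k).
  move=> p; apply: (@continuous_comp _ _ _ snd (fun u : 'rV[R]_N => u ord0 k)).
    exact: cvg_snd.
  exact: coord_continuous.
have -> : (fun p : T * 'rV[R]_N => dotv p.2^T (A p.1 *m p.2^T)) =
    fun p => \sum_(a < N) \sum_(b < N) p.2 ord0 a * (A p.1 a b * p.2 ord0 b).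
  apply: funext => p; apply: eq_bigr => a _.
  by rewrite !mxE mulr_sumr; apply: eq_bigr => b _; rewrite !mxE.
apply: continuous_big => [|a _]; first exact: add_continuous.
apply: continuous_big => [|b _]; first exact: add_continuous.
move=> p; apply: continuousM (coordc a p) _; apply: continuousM _ (coordc b p).
apply: (@continuous_comp _ _ _ fst (fun x => A x a b)); first exact: cvg_fst.
exact: Ac.
Qed.

(* Minimise the quadratic form over the compact set T x (unit sphere of the max-norm). *)
Lemma posdef_unif (R : realType) (T : topologicalType) N (A : T -> 'M[R]_N) :
  compact [set: T] ->
  (forall i j, continuous (fun x => A x i j)) ->
  (forall x (v : 'cV[R]_N), v != 0 -> 0 < dotv v (A x *m v)) ->
  exists2 c : R, 0 < c & forall x v, c * dotv v v <= dotv v (A x *m v).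
Proof.
move=> Tc Ac Apos.
have [[x0 _]|T0] := pselect (exists x : T, True); last first.
  by exists 1 => // x; case: T0; exists x.
case: N A Ac Apos => [|N] A Ac Apos.
  by exists 1 => // x v; rewrite /dotv !big_ord0 mulr0.
pose f (p : T * 'rV[R]_N.+1) := dotv p.2^T (A p.1 *m p.2^T).
pose K := [set: T] `*` [set u : 'rV[R]_N.+1 | `|u| = 1].
have Kc : compact K by apply: compact_setX => //; exact: unit_sphere_compact.
pose e : 'rV[R]_N.+1 := const_mx 1.
have e0 : e != 0 by apply/eqP => /matrixP/(_ ord0 ord0)/eqP; rewrite !mxE oner_eq0.
have K0 : K !=set0 by exists (x0, `|e|^-1 *: e); split => //=; exact: normfZV.
have [p0 p0K p0min] :=
  compact_EVT_min K0 Kc (continuous_subspaceT (quadform_continuous Ac)).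
have fp0 : 0 < f p0.
  move: p0K; rewrite inE => -[_ /= p0n]; apply: Apos; rewrite trmx_eq0 -normr_eq0 p0n.
  exact: oner_neq0.
exists (f p0 / N.+1%:R) => [|x v]; first by rewrite divr_gt0.
have [->|v0] := eqVneq v 0; first by rewrite mulmx0 !dotv0 mulr0.
set m := `|v^T|; have m0 : 0 < m by rewrite normr_gt0 trmx_eq0.
have : f p0 <= f (x, m^-1 *: v^T).
  by apply: p0min; rewrite inE; split => //=; rewrite normfZV ?trmx_eq0.
rewrite /f /= linearZ /= trmxK -scalemxAr dotvZZ => fp0le.
have {}fp0le : f p0 * m ^+ 2 <= dotv v (A x *m v).
  by rewrite -ler_pdivlMr ?exprn_gt0 // mulrC -exprVn.
apply: le_trans fp0le; rewrite -mulrA ler_pM2l // ler_pdivrMl //.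
exact: dotv_self_le.
Qed.

Definition frobsq (R : pzSemiRingType) m n (Q : 'M[R]_(m, n)) : R :=
  \sum_i \sum_j Q i j ^+ 2.

Lemma frobsq_ge0 (R : realDomainType) m n (Q : 'M[R]_(m, n)) : 0 <= frobsq Q.
Proof. by apply: sumr_ge0 => i _; apply: sumr_ge0 => j _; exact: sqr_ge0. Qed.

Lemma sqr_le_frobsq (R : realDomainType) m n (Q : 'M[R]_(m, n)) a b :
  Q a b ^+ 2 <= frobsq Q.
Proof.
rewrite /frobsq (bigD1 a) //= (bigD1 b) //= -addrA lerDl.
apply: addr_ge0; first by apply: sumr_ge0 => j _; exact: sqr_ge0.
by apply: sumr_ge0 => i _; apply: sumr_ge0 => j _; exact: sqr_ge0.
Qed.

Lemma normrM_le_frobsq (R : realDomainType) m n (Q : 'M[R]_(m, n)) a b c d :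
  `|Q a b * Q c d| <= frobsq Q.
Proof.
rewrite normrM; wlog le_ab_cd : a b c d / `|Q a b| <= `|Q c d|.
  move=> wlog_le; case: (leP `|Q a b| `|Q c d|) => [|/ltW]; first exact: wlog_le.
  by rewrite mulrC; exact: wlog_le.
apply: le_trans (ler_wpM2r (normr_ge0 _) le_ab_cd) _.
by rewrite -expr2 real_normK ?num_real // sqr_le_frobsq.
Qed.

Lemma conj_delta_mxE (R : comPzRingType) m n (Q : 'M[R]_(m, n)) a b i j :
  (Q *m delta_mx a b *m Q^T) i j = Q i a * Q j b.
Proof.
rewrite !mxE (bigD1 b) //= big1 ?addr0.
  rewrite !mxE (bigD1 a) //= big1 ?addr0; first by rewrite !mxE !eqxx mulr1.
  by move=> k /negbTE kb; rewrite !mxE kb /= mulr0.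
move=> k /negbTE kb; rewrite !mxE big1 ?mul0r // => l _.
by rewrite !mxE kb andbF mulr0.
Qed.

Lemma trSym_conj_le (R : realDomainType) N (Q : 'M[R]_N) :
  `|trSym (fun X => Q *m X *m Q^T)| <= (N * N * 2)%:R * frobsq Q.
Proof.
have term_le (i j : 'I_N) : `|(Q *m symE R i j *m Q^T) i j| <= 2 * frobsq Q.
  rewrite /symE; case: eqP => [<-|_].
    rewrite conj_delta_mxE; apply: le_trans (normrM_le_frobsq _ _ _ _ _) _.
    by rewrite ler_peMl ?frobsq_ge0 // ler1n.
  rewrite mulmxDr mulmxDl mxE !conj_delta_mxE; apply: le_trans (ler_normD _ _) _.
  by rewrite mulr2n mulrDl mul1r lerD // normrM_le_frobsq.
rewrite /trSym; apply: le_trans (ler_norm_sum _ _ _) _.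
apply: le_trans (_ : _ <= \sum_(i < N) \sum_(j < N) 2 * frobsq Q) _.
  apply: ler_sum => i _; apply: le_trans (ler_norm_sum _ _ _) _.
  rewrite [leLHS]big_mkcond /=; apply: ler_sum => j _.
  by case: ifP => _; [exact: term_le | rewrite mulr_ge0 ?frobsq_ge0].
by rewrite !sumr_const !card_ord -mulrnA natrM -mulrA !mulr_natl.
Qed.

Lemma frobsq_le_mxtrace (R : realDomainType) m n (Q : 'M[R]_(m, n)) A c :
  (forall v, c * dotv v v <= dotv v (A *m v)) -> c * frobsq Q <= \tr (Q^T *m A *m Q).
Proof.
move=> Apos; rewrite /frobsq exchange_big mulr_sumr; apply: ler_sum => k _.
have -> : \sum_i Q i k ^+ 2 = dotv (col k Q) (col k Q).
  by apply: eq_bigr => i _; rewrite !mxE expr2.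
suff -> : (Q^T *m A *m Q) k k = dotv (col k Q) (A *m col k Q) by exact: Apos.
rewrite -mulmxA mxE; apply: eq_bigr => i _; rewrite !mxE; congr (_ * _).
by apply: eq_bigr => l _; rewrite !mxE.
Qed.

Definition prepend t (w : seq 'I_t) (x : Sigma t) : Sigma t := foldr (@scons t) x w.

Fixpoint words t n : seq (seq 'I_t) :=
  if n is n'.+1 then [seq i :: w | w <- words t n', i <- index_enum 'I_t]
  else [:: [::]].

Lemma mem_words t (w : seq 'I_t) : w \in words t (size w).
Proof.
elim: w => [|i w IHw] /=; first by rewrite inE.
by apply/allpairsP; exists (w, i); rewrite IHw mem_index_enum.
Qed.

Lemma L0_iter_eigen (R : comPzRingType) t N (P : 'I_t -> 'M[R]_N)
    (A : Sigma t -> 'M[R]_N) beta :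
  (forall x, L0 P A x = beta *: A x) -> forall n x,
  \sum_(w <- words t n) (\prod_(i <- w) P i)^T *m A (prepend w x) *m \prod_(i <- w) P i
    = beta ^+ n *: A x.
Proof.
move=> Aeig; elim=> [|n IHn] x /=.
  by rewrite big_seq1 big_nil trmx1 mul1mx mulmx1 scale1r.
rewrite big_allpairs_dep /= exprS -scalerA -IHn scaler_sumr; apply: eq_bigr => w _.
rewrite scalemxAl scalemxAr -Aeig /L0 mulmx_sumr mulmx_suml.
apply: eq_bigr => i _; rewrite big_cons -mulmxE trmx_mul.
by rewrite /Psi !mulmxA.
Qed.

Lemma tPsi_wordE (R : comPzRingType) t N (P : 'I_t -> 'M[R]_N) x n X :
  tPsi_word P x n X =
  (\prod_(i <- map x (iota 0 n)) P i) *m X *m (\prod_(i <- map x (iota 0 n)) P i)^T.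
Proof.
rewrite /tPsi_word; elim: (iota 0 n) X => [|k s IHs] X /=.
  by rewrite big_nil trmx1 mul1mx mulmx1.
by rewrite IHs big_cons -mulmxE trmx_mul /tPsi !mulmxA.
Qed.

Lemma sum_words_frobsq_le_tr (R : realFieldType) t N (P : 'I_t -> 'M[R]_N)
    (A : Sigma t -> 'M[R]_N) beta c :
  (forall x, L0 P A x = beta *: A x) -> 0 < c ->
  (forall x v, c * dotv v v <= dotv v (A x *m v)) -> forall n x,
  \sum_(w <- words t n) frobsq (\prod_(i <- w) P i) <= \tr (A x) / c * beta ^+ n.
Proof.
move=> Aeig c0 Apos n x; rewrite mulrAC ler_pdivlMr // mulrC mulr_sumr [leRHS]mulrC.
rewrite -mxtraceZ -(L0_iter_eigen Aeig n x) raddf_sum /=; apply: ler_sum => w _.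
exact: frobsq_le_mxtrace.
Qed.

Lemma sum_words_frobsq_le_expn (R : realType) t N (P : 'I_t -> 'M[R]_N) beta :
  posdef_eigenvalue P beta ->
  exists2 K : R, 0 <= K & forall n, (0 < n)%N ->
    \sum_(w <- words t n) frobsq (\prod_(i <- w) P i) <= K * beta ^+ n.
Proof.
move=> [A [Ac [_ [Apos Aeig]]]].
have [c c0 Aunif] := posdef_unif (@Sigma_compact t) Ac Apos.
case: t P A Ac Apos Aeig Aunif => [|t] P A _ _ Aeig Aunif.
  exists 0 => // -[|n] //= _.
  by rewrite big_allpairs_dep big1 ?mul0r // => w _; rewrite big_ord0.
pose x0 : Sigma t.+1 := fun=> ord0.
have trA0 : 0 <= \tr (A x0).
  have := frobsq_le_mxtrace 1%:M (Aunif x0); rewrite trmx1 mul1mx mulmx1.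
  by apply: le_trans; exact: mulr_ge0 (ltW c0) (frobsq_ge0 _).
exists (\tr (A x0) / c) => [|n _]; first exact: divr_ge0 trA0 (ltW c0).
exact: sum_words_frobsq_le_tr.
Qed.

Lemma iter_shiftE t k (x : Sigma t) m : iter k (@Defs.shift t) x m = x (k + m)%N.
Proof. by elim: k m => [|k IHk] m //=; rewrite /Defs.shift IHk addnS. Qed.

Lemma periodic_modn t n (x : Sigma t) :
  iter n (@Defs.shift t) x = x -> forall m, x m = x (m %% n)%N.
Proof.
move=> xper m; rewrite {1}(divn_eq m n); elim: (m %/ n)%N => [|k IHk] //.
by rewrite mulSn -addnA -iter_shiftE xper.
Qed.

Lemma periodic_word_inj t n (x x' : Sigma t) : (0 < n)%N ->
  iter n (@Defs.shift t) x = x -> iter n (@Defs.shift t) x' = x' ->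
  map x (iota 0 n) = map x' (iota 0 n) -> x = x'.
Proof.
move=> n0 xper x'per eqw; apply: funext => m.
rewrite (periodic_modn xper) (periodic_modn x'per).
have := congr1 (nth (x 0%N) ^~ (m %% n)%N) eqw.
by rewrite !(nth_map 0%N) ?size_iota ?ltn_mod // nth_iota ?ltn_mod.
Qed.

Lemma minper_leq_orbit t (x x' : Sigma t) n n' :
  minper x n -> minper x' n' -> Defs.orbit x n x' -> (n' <= n)%N.
Proof.
move=> [n0 [xper _]] [_ [_ x'min]] [k _ x'E].
rewrite leqNgt; apply/negP => lt_n_n'; apply: (x'min n); first by rewrite n0.
by rewrite -x'E -iterD addnC iterD xper.
Qed.

(* Reads the word off the same representative of [tau] that [trOrb] uses. *)
Definition orbit_word t (tau : set (Sigma t)) : seq 'I_t :=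
  match pselect (exists xn : Sigma t * nat,
                   minper xn.1 xn.2 /\ tau = Defs.orbit xn.1 xn.2) with
  | left e => let xn := projT1 (cid e) in map xn.1 (iota 0 xn.2)
  | right _ => [::]
  end.

Lemma trOrb_le (R : realType) t N (P : 'I_t -> 'M[R]_N) tau :
  `|trOrb P tau| <= (N * N * 2)%:R * frobsq (\prod_(i <- orbit_word tau) P i).
Proof.
rewrite /trOrb /orbit_word; case: pselect => [e|_].
  by case: (cid e) => [[x n] /= _]; rewrite (funext (tPsi_wordE P x n)) trSym_conj_le.
by rewrite normr0 mulr_ge0 ?frobsq_ge0.
Qed.

Lemma orbit_wordE t (x : Sigma t) n : minper x n ->
  exists y m, [/\ minper y m, Defs.orbit x n = Defs.orbit y m, (m <= n)%N
    & orbit_word (Defs.orbit x n) = map y (iota 0 m)].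
Proof.
move=> xmin; rewrite /orbit_word; case: pselect => [e|]; last first.
  by case; exists (x, n).
case: (cid e) => [[y m] /= [ymin eqorb]]; exists y, m; split => //.
have y_in_orbit : Defs.orbit x n y by rewrite eqorb; exists 0%N => //; case: ymin.
exact: minper_leq_orbit xmin ymin y_in_orbit.
Qed.

Lemma orbit_word_inj t (x1 x2 : Sigma t) n1 n2 : minper x1 n1 -> minper x2 n2 ->
  orbit_word (Defs.orbit x1 n1) = orbit_word (Defs.orbit x2 n2) ->
  Defs.orbit x1 n1 = Defs.orbit x2 n2.
Proof.
move=> /orbit_wordE [y1 [m1 [y1min -> _ ->]]] /orbit_wordE [y2 [m2 [y2min -> _ ->]]].
move=> eqw; have eqm : m1 = m2 by have := congr1 size eqw; rewrite !size_map !size_iota.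
case: y1min y2min eqw => m1_gt0 [y1per _] [_ [y2per _]]; rewrite -eqm in y2per *.
by move=> /(periodic_word_inj m1_gt0 y1per y2per) ->.
Qed.

Lemma ler_sum_uniq_subset (R : numDomainType) (T : eqType) (s1 s2 : seq T)
    (G : T -> R) :
  uniq s1 -> {subset s1 <= s2} -> (forall i, 0 <= G i) ->
  \sum_(i <- s1) G i <= \sum_(i <- s2) G i.
Proof.
elim: s1 s2 => [|a s1 IHs1] s2 /=; first by rewrite big_nil => _ _ G0; exact: sumr_ge0.
case/andP=> a_notin_s1 s1_uniq s12 G0.
have a_in_s2 : a \in s2 by apply: s12; rewrite mem_head.
rewrite (perm_big _ (perm_to_rem a_in_s2)) !big_cons lerD2l.
apply: IHs1 => // b b_in_s1; have /s12 b_in_s2 : b \in a :: s1 by rewrite inE b_in_s1 orbT.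
by apply: rem_mem b_in_s2; apply: contraNneq a_notin_s1 => <-.
Qed.

Lemma ler_norm_fsum_inj (R : realDomainType) (T : choiceType) (U : eqType)
    (A : set T) (F : T -> R) (h : T -> U) (G : U -> R) (W : seq U) :
  (forall u, 0 <= G u) -> (forall x, A x -> `|F x| <= G (h x)) ->
  (forall x y, A x -> A y -> h x = h y -> x = y) -> (forall x, A x -> h x \in W) ->
  `|\sum_(x \in A) F x| <= \sum_(u <- W) G u.
Proof.
move=> G0 FG h_inj hW; set S := finite_support 0 A F.
have SA x : x \in S -> A x.
  case: (pselect (finite_set (A `&` F @^-1` [set~ 0]))) => [finA|infA].
    by rewrite /S in_finite_support // inE => -[].
  by rewrite /S no_finite_support.
apply: le_trans (ler_norm_sum _ _ _) _.
apply: le_trans (_ : _ <= \sum_(x <- S) G (h x)) _.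
  by rewrite big_seq [leRHS]big_seq; apply: ler_sum => x /SA /FG.
rewrite -(big_map h xpredT G); apply: ler_sum_uniq_subset => //.
  rewrite map_inj_in_uniq ?finite_support_uniq //.
  by move=> x y /SA Ax /SA Ay; exact: h_inj.
by move=> u /mapP [x /SA /hW hx ->].
Qed.

Lemma piprime_le_sum_words (R : realType) t N (P : 'I_t -> 'M[R]_N) (y : R) :
  0 <= y -> `|piprime P y| <= (N * N * 2)%:R *
    \sum_(1 <= n < (Num.trunc y).+1) \sum_(w <- words t n) frobsq (\prod_(i <- w) P i).
Proof.
move=> y0; pose W := flatten [seq words t n | n <- index_iota 1 (Num.trunc y).+1].
have G0 w : 0 <= (N * N * 2)%:R * frobsq (\prod_(i <- w) P i).
  by rewrite mulr_ge0 ?frobsq_ge0.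
have word_inj (tau1 tau2 : set (Sigma t)) : orbits_le y tau1 -> orbits_le y tau2 ->
    orbit_word tau1 = orbit_word tau2 -> tau1 = tau2.
  by move=> [x1 [n1 [x1min [_ ->]]]] [x2 [n2 [x2min [_ ->]]]]; exact: orbit_word_inj.
have word_in_W tau : orbits_le y tau -> orbit_word tau \in W.
  move=> [x [n [xmin [ny ->]]]]; have [z [m [[m0 _] _ le_mn ->]]] := orbit_wordE xmin.
  apply/flattenP; exists (words t m); last first.
    by have := mem_words (map z (iota 0 m)); rewrite size_map size_iota.
  apply/mapP; exists m => //; rewrite mem_index_iota m0 ltnS truncn_ge_nat //.
  by apply: le_trans ny; rewrite ler_nat.
apply: le_trans (ler_norm_fsum_inj G0 (fun tau _ => trOrb_le P tau) word_inj word_in_W) _.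
rewrite big_flatten big_map mulr_sumr; apply: ler_sum => n _.
by rewrite mulr_sumr.
Qed.

Lemma geometric_sum_le (R : realFieldType) (b : R) Y : 1 < b ->
  \sum_(1 <= n < Y.+1) b ^+ n <= b ^+ Y.+1 / (b - 1).
Proof.
move=> b1; have b1_gt0 : 0 < b - 1 by rewrite subr_gt0.
apply: (@le_trans _ _ (\sum_(n < Y.+1) b ^+ n)).
  by rewrite -(big_mkord xpredT (fun n => b ^+ n)) big_ltn // expr0 lerDr ler01.
by rewrite ler_pdivlMr // mulrC -subrX1 lerBlDr lerDl ler01.
Qed.

Lemma piprime_le_powR (R : realType) t N (P : 'I_t -> 'M[R]_N) beta :
  1 < beta -> posdef_eigenvalue P beta ->
  exists2 C : R, 0 <= C & forall y, 0 <= y -> `|piprime P y| <= C * beta `^ y.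
Proof.
move=> beta1 Peig; have beta0 : 0 <= beta by rewrite ltW // (lt_trans ltr01).
have [K K0 wordsK] := sum_words_frobsq_le_expn Peig.
exists ((N * N * 2)%:R * K * (beta / (beta - 1))).
  by rewrite !mulr_ge0 // invr_ge0 subr_ge0 ltW.
move=> y y0; set Y := Num.trunc y.
apply: le_trans (piprime_le_sum_words P y0) _; rewrite -!mulrA ler_wpM2l //.
apply: le_trans (_ : _ <= \sum_(1 <= n < Y.+1) K * beta ^+ n) _.
  by rewrite big_nat [leRHS]big_nat; apply: ler_sum => n /andP[n0 _]; exact: wordsK.
rewrite -mulr_sumr ler_wpM2l //; apply: le_trans (geometric_sum_le Y beta1) _.
rewrite exprS -mulrA ler_wpM2l // mulrC ler_wpM2l ?invr_ge0 ?subr_ge0 ?(ltW beta1) //.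
by rewrite -powR_mulrn // ler_powR ?(ltW beta1) // /Y truncn_le.
Qed.

Lemma cvg_powR_Nlinear (R : realType) (b a : R) : 1 < b -> 0 < a ->
  b `^ (- (a * y)) @[y --> +oo] --> 0.
Proof.
move=> b1 a0; have alnb0 : 0 < a * ln b by rewrite mulr_gt0 ?ln_gt0.
have -> : (fun y => b `^ (- (a * y))) = (fun y => expR (- (a * ln b * y))).
  apply: funext => y; rewrite /powR gt_eqF ?(lt_trans ltr01) //.
  by congr expR; rewrite mulrAC mulNr.
apply: (cvg_comp _ _ _ (@cvgr_expR R)); apply/cvgryPge => M.
apply: filterS (nbhs_pinfty_ge (num_real (M / (a * ln b)))) => y.
by rewrite ler_pdivrMr // [y * _]mulrC.
Qed.

Unset Implicit Arguments.

Theorem lemma3p4 (R : realType) (t d q : nat)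
  (L : 'I_t -> 'M[R]_d) (b : 'I_t -> 'cV[R]_d)
  (* psi_i x = L_i x + b_i are affine bijections *)
  (Linv : forall i, L i \in unitmx)
  (* max_i Lip(psi_i) < 1 *)
  (Hcontr : exists2 c : R, c < 1 & forall i (x y : 'cV[R]_d),
      normv ((L i *m x + b i) - (L i *m y + b i)) <= c * normv (x - y))
  (Hq : (1 <= q <= d)%N)
  (* (ND_q) *)
  (HND : exists2 g : R, 0 < g & forall c e : 'cV[R]_(qdim d q),
      exists i, g * normv c * normv e <= `| dotv (pullq q (L i) *m c) e |)
  (beta : R)
  (Hbeta : posdef_eigenvalue (fun i => pullq q (L i)) beta)
  (Hbeta1 : 1 < beta)
  (g' : R) (Hg' : 1 < g') :
  (fun y : R => piprime (fun i => pullq q (L i)) y / beta `^ (g' * y))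
    @ +oo --> 0.
Proof.
have [C C0 piC] := piprime_le_powR Hbeta1 Hbeta.
have beta_gt0 : 0 < beta by rewrite (lt_trans ltr01).
have g'1_gt0 : 0 < g' - 1 by rewrite subr_gt0.
pose h y := C * beta `^ (- ((g' - 1) * y)).
have h0 : h y @[y --> +oo] --> 0.
  by rewrite -(mulr0 C); apply: cvgM; [exact: cvg_cst | exact: cvg_powR_Nlinear].
apply: (@squeeze_cvgr _ _ _ _ (fun y => - h y) h); last exact: h0; last first.
  by rewrite -oppr0; exact: cvgN.
near=> y; have y0 : 0 <= y by near: y; exact: nbhs_pinfty_ge.
rewrite -ler_norml normrM normfV (ger0_norm (powR_ge0 _ _)) ler_pdivrMr ?powR_gt0 //.
apply: le_trans (piC y y0) _; rewrite /h -mulrA -powRD ?(gt_eqF beta_gt0) ?implybT //.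
by rewrite mulrBl mul1r opprB subrK.
Unshelve. all: by end_near. Qed.
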